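(* Let $\mathfrak g$ be a unimodular almost abelian Lie algebra with a Hermitian structure $(J,g)$, and let $e$ be an admissible frame with data $\lambda,v,A$ (so $\lambda+\operatorname{tr}A+\overline{\operatorname{tr}A}=0$). Then: (1) $s=-\lambda^2\le0$, and $s=0\iff Ric^{(1)}=0\iff\lambda=0$; (2) $\hat s=-2\lambda^2-|v|^2\le0$, and $\hat s=0\iff Ric^{(3)}=0\iff\lambda=0,\ v=0$; (3) $Ric^{(2)}=0\iff R=0\iff \lambda=0,\ v=0,\ [A,A^\ast]=0$.
   Context: Setup: Hermitian structure $(J,g)$ on a real Lie algebra $\mathfrak g$ of dimension $2n$ ($J$ integrable, $g$ a $J$-invariant inner product), viewed as left-invariant on the Lie group. $\mathfrak g^{1,0}=\{x-\sqrt{-1}Jx\}$, unitary frame $e_1,\dots,e_n$ of $\mathfrak g^{1,0}$ ($g(e_i,\bar e_j)=\delta_{ij}$, $g$ extended bilinearly), dual coframe $\varphi_i$, $d$ the Chevalley–Eilenberg differential. $\mathfrak g$ is unimodular if $\operatorname{tr}\mathrm{ad}_x=0$ for all $x$; almost abelian if non-abelian with an abelian ideal of codimension one. An admissible frame is a unitary frame with $d\varphi_1=-\lambda\,\varphi_1\wedge\bar\varphi_1$, $d\varphi_i=-\bar v_i\,\varphi_1\wedge\bar\varphi_1+\sum_{j=2}^n\overline{A_{ij}}(\varphi_1+\bar\varphi_1)\wedge\varphi_j$, $\lambda\in\mathbb R$, $v\in\mathbb C^{n-1}$, $A\in M_{n-1}(\mathbb C)$. $R$ denotes the curvature of the Chern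 connection (the unique connection preserving $J,g$ with torsion of vanishing $(1,1)$-part), $R_{i\bar jk\bar\ell}=g(R(e_i,\bar e_j)e_k,\bar e_\ell)$. Chern Ricci curvatures: $Ric^{(1)}_{i\bar j}=\sum_rR_{i\bar jr\bar r}$, $Ric^{(2)}_{i\bar j}=\sum_rR_{r\bar ri\bar j}$, $Ric^{(3)}_{i\bar j}=\sum_rR_{r\bar ji\bar r}$; Chern scalar curvature $s=\sum_iRic^{(1)}_{i\bar i}$; altered scalar curvature $\hat s=\sum_iRic^{(3)}_{i\bar i}$. *)

From HB Require Import structures.
From mathcomp Require Import all_boot all_order all_algebra.
From mathcomp Require Import reals.
From mathcomp.real_closed Require Import complex.
Set Implicit Arguments. Unset Strict Implicit. Unset Printing Implicit Defensive.
Import Order.TTheory GRing.Theory Num.Theory.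
Local Open Scope ring_scope.

(* Model.  A real Lie algebra g of dimension 2n with a Hermitian structure   *)
(* (J,g) and a unitary frame e_1..e_n of g^{1,0} is encoded through its      *)
(* complexification g_C = C^(2n) = 'rV[C]_(n + n), written in the basis      *)
(* (e_1,..,e_n, ebar_1,..,ebar_n): the coordinate lshift n i is the e_i      *)
(* component and rshift n i is the ebar_i component.  The real Lie algebra   *)
(* g is the set of vectors fixed by the conjugation [vconj].  J acts by      *)
(* sqrt(-1) on g^{1,0} (first block) and by -sqrt(-1) on g^{0,1} (second     *)
(* block); g is extended complex-bilinearly with g(e_i, ebar_j) = delta_ij,  *)
(* g(e_i,e_j) = g(ebar_i, ebar_j) = 0.  All tensors are left-invariant,      *)
(* hence multilinear maps on g_C.                                            *)

Section Defs.
Variable R : realType.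
Local Notation C := (R[i]).
Variable n : nat.
Local Notation V := 'rV[C]_(n + n).

Definition fr (i : 'I_n) : V := delta_mx 0 (lshift n i).
Definition frb (i : 'I_n) : V := delta_mx 0 (rshift n i).

Definition cofr (i : 'I_n) (x : V) : C := x 0 (lshift n i).
Definition cofrb (i : 'I_n) (x : V) : C := x 0 (rshift n i).

Definition vconj (x : V) : V :=
  row_mx (map_mx Num.conj (rsubmx x)) (map_mx Num.conj (lsubmx x)).
Definition is_real_vec (x : V) : Prop := vconj x = x.

Definition cxJ (x : V) : V := row_mx ('i%C *: lsubmx x) ((- 'i%C) *: rsubmx x).

Definition gC (x y : V) : C :=
  \sum_(i < n) (x 0 (lshift n i) * y 0 (rshift n i)
               + x 0 (rshift n i) * y 0 (lshift n i)).

Definition p10 (x : V) : V := row_mx (lsubmx x) 0.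
Definition p01 (x : V) : V := row_mx 0 (rsubmx x).

Definition bil (c : 'I_(n + n) -> 'I_(n + n) -> V) (x y : V) : V :=
  \sum_(k < n + n) \sum_(l < n + n) (x 0 k * y 0 l) *: c k l.

(* c : structure constants of the (complexified) bracket *)
Definition is_real_Lie_algebra (c : 'I_(n + n) -> 'I_(n + n) -> V) : Prop :=
  let br := bil c in
  [/\ (forall x y, br x y = - br y x),
      (forall x y z, br x (br y z) + br y (br z x) + br z (br x y) = 0)
    & (forall x y, vconj (br x y) = br (vconj x) (vconj y))].

Definition J_integrable (c : 'I_(n + n) -> 'I_(n + n) -> V) : Prop :=
  forall x y, p01 (bil c (p10 x) (p10 y)) = 0.

Definition tr_ad (c : 'I_(n + n) -> 'I_(n + n) -> V) (x : V) : C :=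
  \sum_(k < n + n) (bil c x (delta_mx 0 k)) 0 k.

Definition unimodular (c : 'I_(n + n) -> 'I_(n + n) -> V) : Prop :=
  forall x, is_real_vec x -> tr_ad c x = 0.

(* almost abelian: g is non-abelian and has an abelian ideal h of real
   codimension one.  h is written as the kernel (in g) of a nonzero real
   linear functional f : g -> R, i.e. of a complex-linear functional
   x |-> (x *m w) 0 0 on g_C which is real (commutes with conjugation). *)
Definition almost_abelian (c : 'I_(n + n) -> 'I_(n + n) -> V) : Prop :=
  let br := bil c in
  (exists x y, [/\ is_real_vec x, is_real_vec y & br x y <> 0]) /\
  exists w : 'cV[C]_(n + n),
    let f := fun x : V => (x *m w) 0 0 in
    [/\ w <> 0,
        (forall x, f (vconj x) = (f x)^*),
        (forall x y, is_real_vec x -> is_real_vec y -> f y = 0 ->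
            f (br x y) = 0)
      & (forall y z, is_real_vec y -> is_real_vec z -> f y = 0 -> f z = 0 ->
            br y z = 0)].

Definition dCE (c : 'I_(n + n) -> 'I_(n + n) -> V) (a : V -> C) (x y : V) : C :=
  - a (bil c x y).
Definition wedge (a b : V -> C) (x y : V) : C := a x * b y - a y * b x.

(* connection (left-invariant, complexified): Gam gives nabla on basis *)
Definition torsion (c Gam : 'I_(n + n) -> 'I_(n + n) -> V) (x y : V) : V :=
  bil Gam x y - bil Gam y x - bil c x y.

Definition part11 (T : V -> V -> V) (x y : V) : V :=
  T (p10 x) (p01 y) + T (p01 x) (p10 y).

Definition is_Chern (c Gam : 'I_(n + n) -> 'I_(n + n) -> V) : Prop :=
  let nab := bil Gam in
  [/\ (forall x y, vconj (nab x y) = nab (vconj x) (vconj y)),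
      (forall x y, nab x (cxJ y) = cxJ (nab x y)),
      (forall x y z, gC (nab x y) z + gC y (nab x z) = 0)
    & (forall x y, part11 (torsion c Gam) x y = 0)].

Definition curv (c Gam : 'I_(n + n) -> 'I_(n + n) -> V) (x y z : V) : V :=
  bil Gam x (bil Gam y z) - bil Gam y (bil Gam x z) - bil Gam (bil c x y) z.

Definition Rc (c Gam : 'I_(n + n) -> 'I_(n + n) -> V) (i j k l : 'I_n) : C :=
  gC (curv c Gam (fr i) (frb j) (fr k)) (frb l).

Definition Ric1 c Gam (i j : 'I_n) : C := \sum_(r < n) Rc c Gam i j r r.
Definition Ric2 c Gam (i j : 'I_n) : C := \sum_(r < n) Rc c Gam r r i j.
Definition Ric3 c Gam (i j : 'I_n) : C := \sum_(r < n) Rc c Gam r j i r.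
Definition scal c Gam : C := \sum_(i < n) Ric1 c Gam i i.
Definition scal_hat c Gam : C := \sum_(i < n) Ric3 c Gam i i.

End Defs.

(* admissible frame with data lam, v, A, for complex dimension n = m.+1;
   index ord0 is e_1 and lift ord0 j is e_{j+2} *)
Definition admissible (R : realType) (m : nat)
    (c : 'I_(m.+1 + m.+1) -> 'I_(m.+1 + m.+1) -> 'rV[R[i]]_(m.+1 + m.+1))
    (lam : R) (v : 'rV[R[i]]_m) (A : 'M[R[i]]_m) : Prop :=
  let phi1 := cofr (@ord0 m) in
  let phib1 := cofrb (@ord0 m) in
  (forall x y, dCE c phi1 x y = - (lam%:C)%C * wedge phi1 phib1 x y) /\
  (forall (i : 'I_m) x y,
     dCE c (cofr (lift ord0 i)) x y =
       - (v 0 i)^* * wedge phi1 phib1 x y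
       + \sum_(j < m) (A i j)^* *
           wedge (fun z => phi1 z + phib1 z) (cofr (lift ord0 j)) x y).

Definition adjmx (R : realType) (m : nat) (A : 'M[R[i]]_m) : 'M[R[i]]_m :=
  map_mx Num.conj A^T.

From HB Require Import structures.
From mathcomp Require Import all_boot all_order all_algebra.
From mathcomp Require Import reals.
From mathcomp.real_closed Require Import complex.
From mathcomp Require Import ring lra.
Import Order.TTheory GRing.Theory Num.Theory.
Local Open Scope ring_scope.
Set Implicit Arguments. Unset Strict Implicit. Unset Printing Implicit Defensive.

(* Let M = [[lam, 0], [v^T, A]] be the matrix of the admissible data and
   theta = phi_1 + phibar_1.  The structure equations read
   d phi_p = sum_q conj(M_pq) theta /\ phi_q; together with the reality of
   the bracket they give [x, y] = theta(y) x D - theta(x) y D for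
   D = diag(adj M, M^T) ([bracketE]), and unimodularity becomes
   tr M + conj(tr M) = lam ([trace_struct_mx]).  The defining properties of
   the Chern connection then determine it: nabla_{e_1} = diag(M, -M^T),
   nabla_{ebar_1} = diag(-adj M, conj M) and the other frame vectors act
   trivially ([chern_nablaE]).  Hence R(x, y) acts as
   (phi_1 /\ phibar_1)(x, y) diag(K, -K^T) with K = [M, adj M] - lam (M + adj M)
   ([curvE], [chern_curv_mx_block]), i.e. R_{i jbar k lbar} =
   delta_{i1} delta_{j1} K_{kl} ([RcE]).  The three statements are then facts
   about the matrix K: tr K = -lam^2, K_{11} = -(2 lam^2 + |v|^2), and K = 0
   iff lam = 0, v = 0 and [A, adj A] = 0. *)

Lemma sum_kron (S : pzSemiRingType) (I : finType) (F : I -> S) k :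
  \sum_i (i == k)%:R * F i = F k.
Proof.
rewrite (bigD1 k) //= eqxx mul1r big1 ?addr0 // => i /negbTE ->.
by rewrite mul0r.
Qed.

Lemma conj_realC (R : realType) (a : R) : ((a%:C)%C)^* = (a%:C)%C.
Proof. exact: conjc_real. Qed.

Lemma sqr_realC_ge0 (R : realType) (a : R) : 0 <= ((a%:C)%C) ^+ 2.
Proof. by rewrite -rmorphXn /= ler0c sqr_ge0. Qed.

Lemma sqr_realC_eq0 (R : realType) (a : R) : ((a%:C)%C) ^+ 2 = 0 -> a = 0.
Proof. by move/eqP; rewrite sqrf_eq0 => /eqP /(congr1 (@complex.Re R)). Qed.

(* 2 sqrt(-1) <> 0: the eigenvalues of J on g^{1,0} and g^{0,1} differ. *)
Lemma twice_i_neq0 (R : realType) : ('i%C + 'i%C : R[i]) != 0.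
Proof. by apply/eqP => /(congr1 (@complex.Im R)) /=; lra. Qed.

Section FrameCalculus.
Variables (R : realType) (n : nat).
Local Notation C := (R[i]).
Local Notation V := 'rV[C]_(n + n).
Local Notation l_ a := (lshift n a).
Local Notation r_ a := (rshift n a).
Implicit Types (T : 'I_(n + n) -> 'I_(n + n) -> V) (x y z : V).

(* The basis (e_1,..,e_n, ebar_1,..,ebar_n) of g_C; locked so that entry
   computations go through [basis_vecE] only. *)
Definition basis_vec (k : 'I_(n + n)) : V := locked (delta_mx 0 k).

Lemma basis_vecE k p : basis_vec k 0 p = (k == p)%:R.
Proof. by rewrite /basis_vec -lock mxE eqxx eq_sym. Qed.

Lemma delta_basis k : delta_mx 0 k = basis_vec k.
Proof. by rewrite /basis_vec -lock. Qed.

Lemma basis_mulmx k (X : 'M[C]_(n + n)) p : (basis_vec k *m X) 0 p = X k p.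
Proof. by rewrite /basis_vec -lock -rowE mxE. Qed.

Lemma bil_basis T k l : bil T (basis_vec k) (basis_vec l) = T k l.
Proof.
rewrite /bil (bigD1 k) //= [X in _ + X]big1 => [|k' nk'k]; last first.
  rewrite big1 // => l' _.
  by rewrite basis_vecE eq_sym (negbTE nk'k) mul0r scale0r.
rewrite addr0 (bigD1 l) //= [X in _ + X]big1 => [|l' nl'l]; last first.
  by rewrite !basis_vecE eqxx eq_sym (negbTE nl'l) mulr0 scale0r.
by rewrite !basis_vecE !eqxx mulr1 scale1r addr0.
Qed.

Lemma coord_combE (a b : C) (u w : V) p :
  (a *: u - b *: w) 0 p = a * u 0 p - b * w 0 p.
Proof. by rewrite !mxE. Qed.

Lemma coord_addZE (a b : C) (u w : V) p :
  (a *: u + b *: w) 0 p = a * u 0 p + b * w 0 p.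
Proof. by rewrite !mxE. Qed.

Lemma bil_expand T x y :
  bil T x y = \sum_k \sum_l (x 0 k * y 0 l) *: bil T (basis_vec k) (basis_vec l).
Proof. by apply: eq_bigr => k _; apply: eq_bigr => l _; rewrite bil_basis. Qed.

Lemma bilZr T x s y : bil T x (s *: y) = s *: bil T x y.
Proof.
rewrite /bil scaler_sumr; apply: eq_bigr => k _; rewrite scaler_sumr.
by apply: eq_bigr => l _; rewrite mxE scalerA mulrCA.
Qed.

Lemma bil0l T y : bil T 0 y = 0.
Proof.
by rewrite /bil big1 // => k _; rewrite big1 // => l _; rewrite mxE mul0r scale0r.
Qed.

Lemma vconj_l x q : vconj x 0 (l_ q) = (x 0 (r_ q))^*.
Proof. by rewrite /vconj row_mxEl !mxE. Qed.

Lemma vconj_r x q : vconj x 0 (r_ q) = (x 0 (l_ q))^*.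
Proof. by rewrite /vconj row_mxEr !mxE. Qed.

Lemma cxJ_l x q : cxJ x 0 (l_ q) = 'i%C * x 0 (l_ q).
Proof. by rewrite /cxJ row_mxEl !mxE. Qed.

Lemma cxJ_r x q : cxJ x 0 (r_ q) = - 'i%C * x 0 (r_ q).
Proof. by rewrite /cxJ row_mxEr !mxE. Qed.

Ltac split_coord p := let p' := fresh "p" in case: (split_ordP p) => p' ->.

Lemma vconj_basis_l q : vconj (basis_vec (l_ q)) = basis_vec (r_ q).
Proof.
apply/rowP => p; split_coord p;
  by rewrite ?vconj_l ?vconj_r !basis_vecE ?eq_lrshift ?eq_rlshift
             ?eq_lshift ?eq_rshift ?rmorph_nat.
Qed.

Lemma vconj_basis_r q : vconj (basis_vec (r_ q)) = basis_vec (l_ q).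
Proof.
apply/rowP => p; split_coord p;
  by rewrite ?vconj_l ?vconj_r !basis_vecE ?eq_lrshift ?eq_rlshift
             ?eq_lshift ?eq_rshift ?rmorph_nat.
Qed.

Lemma vconjD x y : vconj (x + y) = vconj x + vconj y.
Proof.
apply/rowP => p; split_coord p;
  by rewrite [in RHS]mxE ?vconj_l ?vconj_r mxE rmorphD.
Qed.

Lemma cxJ_basis_l q : cxJ (basis_vec (l_ q)) = 'i%C *: basis_vec (l_ q).
Proof.
apply/rowP => p; split_coord p; rewrite ?cxJ_l ?cxJ_r mxE //.
by rewrite !basis_vecE eq_lrshift !mulr0.
Qed.

Lemma cxJ_basis_r q : cxJ (basis_vec (r_ q)) = - 'i%C *: basis_vec (r_ q).
Proof.
apply/rowP => p; split_coord p; rewrite ?cxJ_l ?cxJ_r mxE //.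
by rewrite !basis_vecE eq_rlshift !mulr0.
Qed.

Lemma p10_basis_l q : p10 (basis_vec (l_ q)) = basis_vec (l_ q).
Proof.
apply/rowP => p; split_coord p; rewrite /p10 ?row_mxEl ?row_mxEr !mxE //.
by rewrite basis_vecE eq_lrshift.
Qed.

Lemma p10_basis_r q : p10 (basis_vec (r_ q)) = 0.
Proof.
apply/rowP => p; split_coord p; rewrite /p10 ?row_mxEl ?row_mxEr !mxE //.
by rewrite basis_vecE eq_rlshift.
Qed.

Lemma p01_basis_l q : p01 (basis_vec (l_ q)) = 0.
Proof.
apply/rowP => p; split_coord p; rewrite /p01 ?row_mxEl ?row_mxEr !mxE //.
by rewrite basis_vecE eq_lrshift.
Qed.

Lemma p01_basis_r q : p01 (basis_vec (r_ q)) = basis_vec (r_ q).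
Proof.
apply/rowP => p; split_coord p; rewrite /p01 ?row_mxEl ?row_mxEr !mxE //.
by rewrite basis_vecE eq_rlshift.
Qed.

Lemma gC_basis_r x q : gC x (basis_vec (r_ q)) = x 0 (l_ q).
Proof.
rewrite /gC (bigD1 q) //= [X in _ + X]big1 => [|i niq]; last first.
  by rewrite !basis_vecE eq_rlshift eq_rshift eq_sym (negbTE niq) !mulr0 addr0.
by rewrite !basis_vecE eq_rlshift eqxx mulr1 mulr0 !addr0.
Qed.

Lemma gC_basis_l x q : gC (basis_vec (l_ q)) x = x 0 (r_ q).
Proof.
rewrite /gC (bigD1 q) //= [X in _ + X]big1 => [|i niq]; last first.
  by rewrite !basis_vecE eq_lrshift eq_lshift eq_sym (negbTE niq) !mul0r addr0.
by rewrite !basis_vecE eq_lrshift eqxx mul1r mul0r !addr0.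
Qed.

Lemma gC0l y : gC 0 y = 0.
Proof. by rewrite /gC big1 // => k _; rewrite !mxE !mul0r addr0. Qed.

End FrameCalculus.

Arguments basis_vec {R n} k.

Section StructureMatrix.
Variables (R : realType) (m : nat) (lam : R) (v : 'rV[R[i]]_m) (A : 'M[R[i]]_m).
Local Notation C := (R[i]).

Definition struct_entry (p q : 'I_m.+1) : C :=
  match unlift ord0 p, unlift ord0 q with
  | None, None => (lam%:C)%C
  | None, Some _ => 0
  | Some i, None => v 0 i
  | Some i, Some j => A i j
  end.

Definition struct_mx : 'M[C]_m.+1 := locked (\matrix_(p, q) struct_entry p q).

Lemma struct_mx00 : struct_mx ord0 ord0 = (lam%:C)%C.
Proof. by rewrite /struct_mx -lock mxE /struct_entry unlift_none. Qed.

Lemma struct_mx0l j : struct_mx ord0 (lift ord0 j) = 0.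
Proof. by rewrite /struct_mx -lock mxE /struct_entry unlift_none liftK. Qed.

Lemma struct_mxl0 i : struct_mx (lift ord0 i) ord0 = v 0 i.
Proof. by rewrite /struct_mx -lock mxE /struct_entry unlift_none liftK. Qed.

Lemma struct_mxll i j : struct_mx (lift ord0 i) (lift ord0 j) = A i j.
Proof. by rewrite /struct_mx -lock mxE /struct_entry !liftK. Qed.

Lemma struct_mx_col0 : lam = 0 -> v = 0 -> forall p, struct_mx p ord0 = 0.
Proof.
move=> lam0 v0 p; case: (unliftP ord0 p) => [i ->|->].
  by rewrite struct_mxl0 v0 mxE.
by rewrite struct_mx00 lam0.
Qed.

Lemma struct_mx_row0 : lam = 0 -> forall q, struct_mx ord0 q = 0.
Proof.
move=> lam0 q; case: (unliftP ord0 q) => [j ->|->]; first exact: struct_mx0l.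
by rewrite struct_mx00 lam0.
Qed.

End StructureMatrix.

(* The matrix that will turn out to be the Chern curvature on g^{1,0}:
   [M, adj M] - L (M + adj M), for a square matrix M and a scalar L. *)
Section CurvatureMatrix.
Variables (R : realType) (k : nat) (M : 'M[R[i]]_k) (L : R[i]).

Definition curv_mx : 'M[R[i]]_k :=
  M *m adjmx M - adjmx M *m M - L *: (M + adjmx M).

Lemma curv_mxE p q :
  curv_mx p q = \sum_r M p r * (M q r)^* - \sum_r (M r p)^* * M r q
                - L * (M p q + (M q p)^*).
Proof.
rewrite /curv_mx !mxE.
by congr (_ - _ - _); apply: eq_bigr => r _; rewrite !mxE.
Qed.

(* The diagonal blocks Q P - P Q - L (P - Q) of the Chern curvature, for
   P = diag(M, -M^T) and Q = diag(-adj M, conj M); see [chern_curv_mx_block]. *)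
Lemma curv_mx_ul :
  - adjmx M *m M - M *m - adjmx M - L *: (M - - adjmx M) = curv_mx.
Proof. by rewrite /curv_mx mulNmx mulmxN !opprK [- _ + _]addrC. Qed.

Lemma curv_mx_dr :
  map_mx Num.conj M *m - M^T - - M^T *m map_mx Num.conj M
  - L *: (- M^T - map_mx Num.conj M) = - curv_mx^T.
Proof.
apply/matrixP => p q; rewrite [RHS]mxE [_^T _ _]mxE curv_mxE !mxE.
under eq_bigr do rewrite !mxE mulrN.
under [X in _ - X - _]eq_bigr do rewrite !mxE mulNr.
under [X in _ = - (X - _ - _)]eq_bigr do rewrite mulrC.
under [X in _ = - (_ - X - _)]eq_bigr do rewrite mulrC.
by rewrite !sumrN; ring.
Qed.

Lemma trace_adjmx : \tr (adjmx M) = (\tr M)^*.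
Proof. by rewrite /mxtrace rmorph_sum; apply: eq_bigr => r _; rewrite !mxE. Qed.

(* The commutator is traceless, so only the second term contributes. *)
Lemma trace_curv_mx : \tr curv_mx = - L * (\tr M + (\tr M)^*).
Proof.
by rewrite /curv_mx !raddfB /= mxtrace_mulC subrr sub0r mxtraceZ mxtraceD
  trace_adjmx mulNr.
Qed.

End CurvatureMatrix.

(* With theta = phi_1 + phibar_1, the
   structure equations say d phi_p = sum_q conj(M_pq) theta /\ phi_q; together
   with the reality of the bracket this gives
     [x, y] = theta(y) x D - theta(x) y D,   D = diag(adj M, M^T),
   i.e. g is almost abelian with ad_{e_1 + ebar_1} acting through D. *)
Section AdmissibleBracket.
Variables (R : realType) (m : nat).
Local Notation C := (R[i]).
Local Notation n := m.+1.
Local Notation V := 'rV[C]_(n + n).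
Local Notation l_ a := (lshift n a).
Local Notation r_ a := (rshift n a).
Local Notation l0 := (l_ ord0).
Local Notation r0 := (r_ ord0).
Implicit Types (x y w : V).

Definition theta (x : V) : C := x 0 l0 + x 0 r0.

Lemma theta_vconj x : theta (vconj x) = (theta x)^*.
Proof. by rewrite /theta vconj_l vconj_r rmorphD addrC. Qed.

Lemma theta_basis k : theta (basis_vec k) = (k == l0)%:R + (k == r0)%:R.
Proof. by rewrite /theta !basis_vecE. Qed.

Lemma sum_theta w : \sum_k theta (basis_vec k) * w 0 k = theta w.
Proof.
under eq_bigr do rewrite theta_basis mulrDl.
by rewrite big_split /= !sum_kron.
Qed.

Variables (lam : R) (v : 'rV[C]_m) (A : 'M[C]_m).
Local Notation L := ((lam%:C)%C).
Local Notation M := (struct_mx lam v A).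

Definition ad_mx : 'M[C]_(n + n) := block_mx (adjmx M) (0 : 'M_n) (0 : 'M_n) M^T.

Lemma ad_mx_l x p : (x *m ad_mx) 0 (l_ p) = \sum_q x 0 (l_ q) * (M p q)^*.
Proof.
rewrite mxE big_split_ord /= [X in _ + X]big1 ?addr0 => [|q _].
  by apply: eq_bigr => q _; rewrite block_mxEul !mxE.
by rewrite block_mxEdl mxE mulr0.
Qed.

Lemma ad_mx_r x p : (x *m ad_mx) 0 (r_ p) = \sum_q x 0 (r_ q) * M p q.
Proof.
rewrite mxE big_split_ord /= big1 ?add0r => [|q _].
  by apply: eq_bigr => q _; rewrite block_mxEdr !mxE.
by rewrite block_mxEur mxE mulr0.
Qed.

Lemma trace_ad_mx : \tr ad_mx = \tr M + (\tr M)^*.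
Proof. by rewrite mxtrace_block trace_adjmx mxtrace_tr addrC. Qed.

Variable c : 'I_(n + n) -> 'I_(n + n) -> V.
Hypothesis c_real : forall x y, vconj (bil c x y) = bil c (vconj x) (vconj y).
Hypothesis c_adm : admissible c lam v A.

Lemma bracket_hol x y p :
  bil c x y 0 (l_ p) =
  \sum_q (M p q)^* * (theta y * x 0 (l_ q) - theta x * y 0 (l_ q)).
Proof.
case: c_adm => adm1 adm2; rewrite big_ord_recl.
have -> : theta y * x 0 l0 - theta x * y 0 l0 = x 0 l0 * y 0 r0 - y 0 l0 * x 0 r0.
  by rewrite /theta; ring.
case: (unliftP ord0 p) => [i ->|->].
  have := adm2 i x y; rewrite /dCE /wedge /cofr /cofrb => /(congr1 -%R).
  rewrite opprK => ->; rewrite struct_mxl0 mulNr opprD opprK -sumrN.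
  congr (_ + _); apply: eq_bigr => j _; rewrite struct_mxll /theta; ring.
have := adm1 x y; rewrite /dCE /wedge /cofr /cofrb => /(congr1 -%R).
rewrite opprK => ->; rewrite struct_mx00 conj_realC big1 ?addr0 => [|j _].
  by ring.
by rewrite struct_mx0l conjC0 mul0r.
Qed.

Lemma bracketE x y :
  bil c x y = theta y *: (x *m ad_mx) - theta x *: (y *m ad_mx).
Proof.
have hol p : bil c x y 0 (l_ p) =
    theta y * (x *m ad_mx) 0 (l_ p) - theta x * (y *m ad_mx) 0 (l_ p).
  rewrite bracket_hol !ad_mx_l !mulr_sumr -sumrB.
  by apply: eq_bigr => q _; ring.
apply/rowP => p; rewrite coord_combE.
case: (split_ordP p) => q ->; first exact: hol.
rewrite -[LHS]conjCK -vconj_l c_real bracket_hol rmorph_sum !ad_mx_r.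
rewrite !mulr_sumr -sumrB; apply: eq_bigr => r _.
by rewrite !theta_vconj !vconj_l rmorphM rmorphB !rmorphM /= !conjCK; ring.
Qed.

Lemma tr_ad_bracket x : tr_ad c x = theta (x *m ad_mx) - theta x * \tr ad_mx.
Proof.
rewrite /tr_ad.
under eq_bigr do rewrite delta_basis bracketE coord_combE basis_mulmx.
by rewrite sumrB sum_theta -mulr_sumr.
Qed.

(* Unimodularity, tested on the real vector e_1 + ebar_1, pins down the
   real part of the trace of M:  tr M + conj (tr M) = lam. *)
Lemma trace_struct_mx : unimodular c -> \tr M + (\tr M)^* = L.
Proof.
pose x : V := basis_vec l0 + basis_vec r0.
have x_real : is_real_vec x.
  by rewrite /is_real_vec /x vconjD vconj_basis_l vconj_basis_r addrC.
have x_l q : x 0 (l_ q) = (q == ord0)%:R.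
  by rewrite /x mxE !basis_vecE eq_lshift eq_rlshift addr0 eq_sym.
have x_r q : x 0 (r_ q) = (q == ord0)%:R.
  by rewrite /x mxE !basis_vecE eq_rshift eq_lrshift add0r eq_sym.
move=> /(_ x x_real); rewrite tr_ad_bracket trace_ad_mx /theta ad_mx_l ad_mx_r.
under eq_bigr do rewrite x_l.
under [X in _ + X - _]eq_bigr do rewrite x_r.
rewrite !sum_kron x_l x_r struct_mx00 conj_realC => /eqP.
rewrite subr_eq0 eqxx /= => /eqP two_tr.
have two_neq0 : (2 : C) != 0 by rewrite pnatr_eq0.
apply: (mulfI two_neq0); have -> : 2 * L = L + L by ring.
by rewrite two_tr; ring.
Qed.

End AdmissibleBracket.

Section StructureCurvature.
Variables (R : realType) (m : nat) (lam : R) (v : 'rV[R[i]]_m) (A : 'M[R[i]]_m).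
Local Notation L := ((lam%:C)%C).
Local Notation M := (struct_mx lam v A).
Local Notation K := (curv_mx M L).

Lemma trace_curv_struct : \tr M + (\tr M)^* = L -> \tr K = - L ^+ 2.
Proof. by move=> trM; rewrite trace_curv_mx trM mulNr. Qed.

Lemma curv_mx00 : K ord0 ord0 = - (2 * L ^+ 2 + \sum_(j < m) `|v 0 j| ^+ 2).
Proof.
rewrite curv_mxE !big_ord_recl struct_mx00 conj_realC.
under eq_bigr do rewrite struct_mx0l mul0r.
rewrite big1_eq; under eq_bigr do rewrite struct_mxl0.
under [\sum_(j < m) `|v 0 j| ^+ 2]eq_bigr do rewrite normCK mulrC.
by ring.
Qed.

Lemma curv_mx00_eq0 : K ord0 ord0 = 0 <-> lam = 0 /\ v = 0.
Proof.
have sum_ge0 : 0 <= \sum_(j < m) `|v 0 j| ^+ 2.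
  by apply: sumr_ge0 => j _; rewrite exprn_ge0.
rewrite curv_mx00; split=> [/eqP|[-> v0]].
  rewrite oppr_eq0 (paddr_eq0 (mulr_ge0 (ler0n _ 2) (sqr_realC_ge0 lam)) sum_ge0).
  case/andP; rewrite mulf_eq0 pnatr_eq0 /= => /eqP/sqr_realC_eq0 lam0 /eqP sum0.
  split=> //; apply/rowP => j; rewrite mxE; apply/eqP.
  have sq_ge0 j' : true -> 0 <= `|v 0 j'| ^+ 2 by rewrite exprn_ge0.
  have /eqP := psumr_eq0P sq_ge0 sum0 (i := j) isT.
  by rewrite sqrf_eq0 normr_eq0.
rewrite big1 => [|j _]; last by rewrite v0 mxE normr0 expr0n.
by rewrite expr0n /= mulr0 addr0 oppr0.
Qed.

Lemma curv_mx_col0 : lam = 0 -> v = 0 -> forall p, K p ord0 = 0.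
Proof.
move=> lam0 v0 p; rewrite curv_mxE !big1 => [|q _|q _].
- by rewrite struct_mx_col0 // struct_mx_row0 // conjC0 lam0; ring.
- by rewrite struct_mx_col0 // mulr0.
- by rewrite struct_mx_row0 // conjC0 mulr0.
Qed.

Lemma curv_mx_row0 : lam = 0 -> v = 0 -> forall q, K ord0 q = 0.
Proof.
move=> lam0 v0 q; rewrite curv_mxE !big1 => [|p _|p _].
- by rewrite struct_mx_col0 // struct_mx_row0 // conjC0 lam0; ring.
- by rewrite struct_mx_col0 // conjC0 mul0r.
- by rewrite struct_mx_row0 // mul0r.
Qed.

Lemma curv_mx_lift : lam = 0 -> v = 0 -> forall i j,
  K (lift ord0 i) (lift ord0 j) = (A *m adjmx A - adjmx A *m A) i j.
Proof.
move=> lam0 v0 i j; have L0 : L = 0 by rewrite lam0; exact: rmorph0.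
rewrite curv_mxE !big_ord_recl !struct_mx_col0 // !struct_mx_row0 // L0.
rewrite conjC0 !mul0r !add0r subr0 !mxE.
by congr (_ - _); apply: eq_bigr => k _; rewrite !struct_mxll !mxE.
Qed.

Lemma curv_mx_eq0 :
  K = 0 <-> [/\ lam = 0, v = 0 & A *m adjmx A - adjmx A *m A = 0].
Proof.
split=> [K0|[lam0 v0 normalA]].
  have [lam0 v0] : lam = 0 /\ v = 0 by apply/curv_mx00_eq0; rewrite K0 mxE.
  by split=> //; apply/matrixP => i j; rewrite -curv_mx_lift // K0 !mxE.
apply/matrixP => p q; rewrite [RHS]mxE.
case: (unliftP ord0 p) => [i ->|->]; last exact: curv_mx_row0.
case: (unliftP ord0 q) => [j ->|->]; last exact: curv_mx_col0.
by rewrite curv_mx_lift // normalA mxE.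
Qed.

End StructureCurvature.

(* Writing nabla_x y = y N(x),
   the conditions defining it force nabla_{e_j} = nabla_{ebar_j} = 0 for
   j >= 2, nabla_{e_1} = diag(M, -M^T) and nabla_{ebar_1} = diag(-adj M,
   conj M).  Its curvature is then R(x, y) z = (phi_1 /\ phibar_1)(x, y) z Kb
   with Kb = [chern_curv_mx] = diag(K, -K^T) and K = curv_mx M lam. *)
Section ChernCurvature.
Variables (R : realType) (m : nat).
Local Notation C := (R[i]).
Local Notation n := m.+1.
Local Notation V := 'rV[C]_(n + n).
Local Notation l_ a := (lshift n a).
Local Notation r_ a := (rshift n a).
Local Notation l0 := (l_ ord0).
Local Notation r0 := (r_ ord0).
Implicit Types (x y z : V).

Variables (lam : R) (v : 'rV[C]_m) (A : 'M[C]_m).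
Local Notation L := ((lam%:C)%C).
Local Notation M := (struct_mx lam v A).
Local Notation K := (curv_mx M L).

Variables (c Gam : 'I_(n + n) -> 'I_(n + n) -> V).
Hypothesis c_real : forall x y, vconj (bil c x y) = bil c (vconj x) (vconj y).
Hypothesis c_adm : admissible c lam v A.
Hypothesis Gam_chern : is_Chern c Gam.

Ltac simp_eq := rewrite ?basis_vecE ?eq_lshift ?eq_rshift ?eq_lrshift ?eq_rlshift
  ?eqxx /= ?mulr1n ?mulr0n.

Lemma bracket_lr_l a b p : c (l_ a) (r_ b) 0 (l_ p) = (b == ord0)%:R * (M p a)^*.
Proof.
rewrite -bil_basis (bracketE c_real c_adm) coord_combE !theta_basis.
rewrite !basis_mulmx /ad_mx.
by rewrite block_mxEul block_mxEdl !mxE; simp_eq; ring.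
Qed.

Lemma bracket_lr_r a b p : c (l_ a) (r_ b) 0 (r_ p) = - (a == ord0)%:R * M p b.
Proof.
rewrite -bil_basis (bracketE c_real c_adm) coord_combE !theta_basis.
rewrite !basis_mulmx /ad_mx.
by rewrite block_mxEur block_mxEdr !mxE; simp_eq; ring.
Qed.

(* Since nabla J = J nabla, nabla preserves the types (1,0) and (0,1). *)
Lemma Gam_type_l k a q : Gam k (l_ a) 0 (r_ q) = 0.
Proof.
case: Gam_chern => _ GJ _ _.
have := congr1 (fun w : V => w 0 (r_ q)) (GJ (basis_vec k) (basis_vec (l_ a))).
rewrite /= cxJ_basis_l bilZr bil_basis cxJ_r mxE => /eqP.
by rewrite -subr_eq0 -mulrBl opprK mulf_eq0 (negbTE (twice_i_neq0 R)) => /eqP.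
Qed.

Lemma Gam_type_r k a q : Gam k (r_ a) 0 (l_ q) = 0.
Proof.
case: Gam_chern => _ GJ _ _.
have := congr1 (fun w : V => w 0 (l_ q)) (GJ (basis_vec k) (basis_vec (r_ a))).
rewrite /= cxJ_basis_r bilZr bil_basis cxJ_l mxE => /eqP.
rewrite -subr_eq0 -mulrBl -opprD mulf_eq0 oppr_eq0.
by rewrite (negbTE (twice_i_neq0 R)) => /eqP.
Qed.

Lemma Gam_torsion a b : Gam (l_ a) (r_ b) - Gam (r_ b) (l_ a) = c (l_ a) (r_ b).
Proof.
case: Gam_chern => _ _ _ T11; have := T11 (basis_vec (l_ a)) (basis_vec (r_ b)).
rewrite /part11 p10_basis_l p01_basis_r p01_basis_l p10_basis_r /torsion.
by rewrite !bil_basis !bil0l !subr0 addr0 => /eqP; rewrite subr_eq0 => /eqP.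
Qed.

(* The Christoffel symbols, from torsion, metric compatibility and reality. *)
Lemma Gam_lr a b p : Gam (l_ a) (r_ b) 0 (r_ p) = - (a == ord0)%:R * M p b.
Proof.
have := congr1 (fun w : V => w 0 (r_ p)) (Gam_torsion a b).
by rewrite /= !mxE Gam_type_l subr0 bracket_lr_r.
Qed.

Lemma Gam_rl a b p : Gam (r_ a) (l_ b) 0 (l_ p) = - (a == ord0)%:R * (M p b)^*.
Proof.
have := congr1 (fun w : V => w 0 (l_ p)) (Gam_torsion b a).
rewrite /= !mxE Gam_type_r sub0r bracket_lr_l => /eqP.
by rewrite eqr_oppLR => /eqP ->; ring.
Qed.

Lemma Gam_ll a b p : Gam (l_ a) (l_ b) 0 (l_ p) = (a == ord0)%:R * M b p.
Proof.
case: Gam_chern => _ _ Gg _.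
have := Gg (basis_vec (l_ a)) (basis_vec (l_ b)) (basis_vec (r_ p)).
rewrite !bil_basis gC_basis_r gC_basis_l Gam_lr => /eqP.
by rewrite addr_eq0 => /eqP ->; ring.
Qed.

Lemma Gam_rr a b p : Gam (r_ a) (r_ b) 0 (r_ p) = (a == ord0)%:R * (M b p)^*.
Proof.
case: Gam_chern => Greal _ _ _.
have := Greal (basis_vec (l_ a)) (basis_vec (l_ b)).
rewrite !vconj_basis_l !bil_basis => <-.
by rewrite vconj_r Gam_ll rmorphM rmorph_nat.
Qed.

Definition nabla1_mx : 'M[C]_(n + n) := block_mx M (0 : 'M_n) (0 : 'M_n) (- M^T).
Definition nablab1_mx : 'M[C]_(n + n) :=
  block_mx (- adjmx M) (0 : 'M_n) (0 : 'M_n) (map_mx Num.conj M).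

Definition chern_nabla x y : V :=
  x 0 l0 *: (y *m nabla1_mx) + x 0 r0 *: (y *m nablab1_mx).

Lemma chern_nabla_basis k l p :
  chern_nabla (basis_vec k) (basis_vec l) 0 p =
  (k == l0)%:R * nabla1_mx l p + (k == r0)%:R * nablab1_mx l p.
Proof. by rewrite /chern_nabla coord_addZE !basis_mulmx !basis_vecE. Qed.

Lemma Gam_basis k l : Gam k l = chern_nabla (basis_vec k) (basis_vec l).
Proof.
apply/rowP => p; rewrite chern_nabla_basis /nabla1_mx /nablab1_mx.
case: (split_ordP k) => a ->; case: (split_ordP l) => b ->;
case: (split_ordP p) => q ->;
  rewrite ?block_mxEul ?block_mxEur ?block_mxEdl ?block_mxEdr ?mxE
          ?Gam_type_l ?Gam_type_r ?Gam_ll ?Gam_lr ?Gam_rl ?Gam_rr; simp_eq; ring.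
Qed.

Lemma chern_nablaE x y : bil Gam x y = chern_nabla x y.
Proof.
apply/rowP => p; rewrite bil_expand summxE /chern_nabla coord_addZE !mxE.
rewrite (eq_bigr (fun k =>
    (k == l0)%:R * (x 0 k * \sum_l y 0 l * nabla1_mx l p)
  + (k == r0)%:R * (x 0 k * \sum_l y 0 l * nablab1_mx l p))).
  by rewrite big_split /= !sum_kron.
move=> k _; rewrite summxE !mulr_sumr -big_split /=; apply: eq_bigr => l _.
by rewrite mxE bil_basis Gam_basis chern_nabla_basis; ring.
Qed.

Local Notation omega := (wedge (cofr (@ord0 m)) (cofrb (@ord0 m))).

Lemma bracket_l0 x y : bil c x y 0 l0 = L * omega x y.
Proof.
case: c_adm => adm1 _; have := adm1 x y; rewrite /dCE => /eqP.
by rewrite mulNr eqr_opp => /eqP.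
Qed.

Lemma bracket_r0 x y : bil c x y 0 r0 = - L * omega x y.
Proof.
rewrite -[LHS]conjCK -vconj_l c_real bracket_l0 rmorphM /= conj_realC /wedge.
by rewrite /cofr /cofrb !vconj_l !vconj_r rmorphB !rmorphM /= !conjCK; ring.
Qed.

Definition chern_curv_mx : 'M[C]_(n + n) :=
  nablab1_mx *m nabla1_mx - nabla1_mx *m nablab1_mx
  - L *: (nabla1_mx - nablab1_mx).

(* Only nabla_{e_1}, nabla_{ebar_1} and the e_1, ebar_1 components of the
   bracket contribute, so the curvature is a multiple of omega. *)
Lemma curvE x y z : curv c Gam x y z = omega x y *: (z *m chern_curv_mx).
Proof.
rewrite /curv !chern_nablaE /chern_nabla bracket_l0 bracket_r0 /chern_curv_mx.
rewrite !mulmxDl -!scalemxAl -!mulmxA !mulmxBr -scalemxAr mulmxBr.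
move: (z *m (nabla1_mx *m nabla1_mx)) (z *m (nabla1_mx *m nablab1_mx))
      (z *m (nablab1_mx *m nabla1_mx)) (z *m (nablab1_mx *m nablab1_mx))
      (z *m nabla1_mx) (z *m nablab1_mx) => u1 u2 u3 u4 u5 u6.
by apply/rowP => p; rewrite !mxE /wedge /cofr /cofrb; ring.
Qed.

Lemma chern_curv_mx_block : chern_curv_mx = block_mx K 0 0 (- K^T).
Proof.
rewrite /chern_curv_mx /nabla1_mx /nablab1_mx !mulmx_block !mulmx0 !mul0mx.
rewrite !addr0 !add0r !opp_block_mx !add_block_mx scale_block_mx opp_block_mx.
by rewrite add_block_mx !subrr scaler0 subrr curv_mx_ul curv_mx_dr.
Qed.

Lemma RcE i j k l :
  Rc c Gam i j k l = (i == ord0)%:R * (j == ord0)%:R * K k l.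
Proof.
rewrite /Rc /fr /frb !delta_basis gC_basis_r curvE mxE basis_mulmx.
rewrite chern_curv_mx_block block_mxEul /wedge /cofr /cofrb !basis_vecE.
by simp_eq; ring.
Qed.

Lemma Ric1E i j : Ric1 c Gam i j = (i == ord0)%:R * (j == ord0)%:R * \tr K.
Proof.
by rewrite /Ric1 /mxtrace mulr_sumr; apply: eq_bigr => r _; rewrite RcE.
Qed.

Lemma Ric2E i j : Ric2 c Gam i j = K i j.
Proof.
rewrite /Ric2 (eq_bigr (fun r => (r == ord0)%:R * ((r == ord0)%:R * K i j))).
  by rewrite sum_kron eqxx mul1r.
by move=> r _; rewrite RcE mulrA.
Qed.

Lemma Ric3E i j : Ric3 c Gam i j = (j == ord0)%:R * K i ord0.
Proof.
rewrite /Ric3 (eq_bigr (fun r => (r == ord0)%:R * ((j == ord0)%:R * K i r))).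
  by rewrite sum_kron.
by move=> r _; rewrite RcE mulrA.
Qed.

Lemma scalE : scal c Gam = \tr K.
Proof.
rewrite /scal (eq_bigr (fun i => (i == ord0)%:R * ((i == ord0)%:R * \tr K))).
  by rewrite sum_kron eqxx mul1r.
by move=> i _; rewrite Ric1E mulrA.
Qed.

Lemma scal_hatE : scal_hat c Gam = K ord0 ord0.
Proof.
rewrite /scal_hat (eq_bigr (fun i => (i == ord0)%:R * K i ord0)).
  by rewrite sum_kron.
by move=> i _; rewrite Ric3E.
Qed.

Lemma scal_part (c_unimodular : unimodular c) :
  [/\ scal c Gam = - L ^+ 2, scal c Gam <= 0,
      (scal c Gam = 0 <-> (forall i j, Ric1 c Gam i j = 0))
    & ((forall i j, Ric1 c Gam i j = 0) <-> lam = 0)].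
Proof.
have s_eq : scal c Gam = - L ^+ 2.
  by rewrite scalE trace_curv_struct // (trace_struct_mx c_real c_adm).
have Ric1_scal i j :
    Ric1 c Gam i j = (i == ord0)%:R * (j == ord0)%:R * scal c Gam.
  by rewrite Ric1E scalE.
have Ric1_00 : Ric1 c Gam ord0 ord0 = scal c Gam by rewrite Ric1_scal eqxx !mul1r.
split=> //; first by rewrite s_eq oppr_le0 sqr_realC_ge0.
  by split=> [s0 i j|Ric0]; [rewrite Ric1_scal s0 mulr0 | rewrite -Ric1_00 Ric0].
split=> [Ric0|lam0 i j].
  by apply: sqr_realC_eq0; apply: oppr_inj; rewrite -s_eq -Ric1_00 Ric0 oppr0.
by rewrite Ric1_scal s_eq lam0 rmorph0 expr0n oppr0 mulr0.
Qed.

Lemma scal_hat_part :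
  [/\ scal_hat c Gam = - (2 * L ^+ 2 + \sum_(j < m) `|v 0 j| ^+ 2),
      scal_hat c Gam <= 0,
      (scal_hat c Gam = 0 <-> (forall i j, Ric3 c Gam i j = 0))
    & ((forall i j, Ric3 c Gam i j = 0) <-> lam = 0 /\ v = 0)].
Proof.
have Ric3_vanish : (forall i j, Ric3 c Gam i j = 0) <-> lam = 0 /\ v = 0.
  split=> [Ric0|[lam0 v0] i j].
    by apply/curv_mx00_eq0; rewrite -(Ric0 ord0 ord0) Ric3E eqxx mul1r.
  by rewrite Ric3E curv_mx_col0 // mulr0.
have sum_ge0 : 0 <= \sum_(j < m) `|v 0 j| ^+ 2.
  by apply: sumr_ge0 => j _; rewrite exprn_ge0.
rewrite scal_hatE curv_mx00; split=> //.
  rewrite oppr_le0 addr_ge0 //.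
  exact: mulr_ge0 (ler0n _ 2) (sqr_realC_ge0 lam).
rewrite -(curv_mx00 lam v A).
by split=> [/curv_mx00_eq0/Ric3_vanish|/Ric3_vanish/curv_mx00_eq0].
Qed.

Lemma curv_part :
  ((forall i j, Ric2 c Gam i j = 0) <-> (forall x y z, curv c Gam x y z = 0)) /\
  ((forall x y z, curv c Gam x y z = 0) <->
     [/\ lam = 0, v = 0 & A *m adjmx A - adjmx A *m A = 0]).
Proof.
have Ric2_vanish : (forall i j, Ric2 c Gam i j = 0) <-> K = 0.
  split=> [Ric0|K0 i j]; last by rewrite Ric2E K0 mxE.
  by apply/matrixP => i j; rewrite -Ric2E Ric0 mxE.
have curv_vanish : (forall x y z, curv c Gam x y z = 0) <-> K = 0.
  split=> [curv0|K0 x y z].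
    apply/Ric2_vanish => i j; rewrite /Ric2 big1 // => r _.
    by rewrite /Rc curv0 gC0l.
  by rewrite curvE chern_curv_mx_block K0 trmx0 oppr0 block_mx0 mulmx0 scaler0.
split; split.
- by move/Ric2_vanish/curv_vanish.
- by move/curv_vanish/Ric2_vanish.
- by move/curv_vanish/curv_mx_eq0.
- by move/curv_mx_eq0/curv_vanish.
Qed.

End ChernCurvature.

Theorem lemma7 (R : realType) (m : nat)
    (c : 'I_(m.+1 + m.+1) -> 'I_(m.+1 + m.+1) -> 'rV[R[i]]_(m.+1 + m.+1))
    (lam : R) (v : 'rV[R[i]]_m) (A : 'M[R[i]]_m)
    (Gam : 'I_(m.+1 + m.+1) -> 'I_(m.+1 + m.+1) -> 'rV[R[i]]_(m.+1 + m.+1)) :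
  is_real_Lie_algebra c -> J_integrable c ->
  unimodular c -> almost_abelian c ->
  admissible c lam v A ->
  is_Chern c Gam ->
  (* (1) *)
  [/\ scal c Gam = - (lam%:C)%C ^+ 2, scal c Gam <= 0,
      (scal c Gam = 0 <-> (forall i j, Ric1 c Gam i j = 0))
    & ((forall i j, Ric1 c Gam i j = 0) <-> lam = 0)] /\
  (* (2) *)
  [/\ scal_hat c Gam = - (2 * (lam%:C)%C ^+ 2 + \sum_(j < m) `|v 0 j| ^+ 2),
      scal_hat c Gam <= 0,
      (scal_hat c Gam = 0 <-> (forall i j, Ric3 c Gam i j = 0))
    & ((forall i j, Ric3 c Gam i j = 0) <-> lam = 0 /\ v = 0)] /\
  (* (3) *)
  ((forall i j, Ric2 c Gam i j = 0) <->
     (forall x y z, curv c Gam x y z = 0)) /\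
  ((forall x y z, curv c Gam x y z = 0) <->
     [/\ lam = 0, v = 0 & A *m adjmx A - adjmx A *m A = 0]).
Proof.
move=> c_Lie _ c_unimodular _ c_adm Gam_chern.
have c_real : forall x y, vconj (bil c x y) = bil c (vconj x) (vconj y).
  by case: c_Lie.
split; first exact: (scal_part c_real c_adm Gam_chern c_unimodular).
split; first exact: (scal_hat_part c_real c_adm Gam_chern).
exact: (curv_part c_real c_adm Gam_chern).
Qed.
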